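(* $*\text{-}\mathsf{WWKL}\le_{sW}\mathsf{WWKL}$ and $*\text{-}\mathsf{WWKL}<_W\mathsf{WWKL}$ (i.e., $\mathsf{WWKL}\not\le_W *\text{-}\mathsf{WWKL}$).
   Context: A represented space is a pair $(X,\delta_X)$ with $\delta_X:\subseteq\mathbb{N}^\mathbb{N}\to X$ a partial surjection. A realizer of $f:\subseteq X\rightrightarrows Y$ is a partial $F$ with $\delta_Y F(p)\in f(\delta_X(p))$ for all $p\in\mathrm{dom}(f\circ\delta_X)$. $f\le_W g$ if there are computable partial $H,K:\subseteq\mathbb{N}^\mathbb{N}\to\mathbb{N}^\mathbb{N}$ such that $p\mapsto H\langle p,GK(p)\rangle$ realizes $f$ for every realizer $G$ of $g$; $f\le_{sW}g$ if instead $HGK$ realizes $f$ for every realizer $G$ of $g$; $f<_W g$ means $f\le_W g$ and not $g\le_W f$. $\mathrm{Tr}$ is the set of binary trees $T\subseteq\{0,1\}^*$ (prefix-closed), represented by characteristic functions; $[T]\subseteq2^\mathbb N$ is its set of infinite paths and $\mu$ is the uniform measure on $2^\mathbb N$ ($\mu(w2^\mathbb N)=2^{-|w|}$). $\mathsf{WWKL}:\subseteq\mathrm{Tr}\rightrightarrows 2^\mathbb N$, $T\mapsto[T]$, has domain $\{T:\mu([T])>0\}$. $*\text{-}\mathsf{WWKL}:\subseteq\mathbb N\times\mathrm{Tr}\rightrightarrows2^\mathbb N$, $(n,T)\mapsto[T]$, has domain $\{(n,T):\mu([T])>2^{-n}\}$. *)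

From Stdlib Require Import Reals Arith List Cantor.
Import ListNotations.
Open Scope R_scope.

Definition baire := nat -> nat.

Definition npair (x y : nat) : nat := Cantor.to_nat (x, y).
Definition nfst (z : nat) : nat := fst (Cantor.of_nat z).
Definition nsnd (z : nat) : nat := snd (Cantor.of_nat z).

(* A complete basis of unary mu-recursive functionals with an oracle
   p : nat -> nat, using Cantor pairing for multiple arguments. *)
Inductive prf : Type :=
| PZero
| PSucc
| PId
| PFst
| PSnd
| POrc
| PPair (f g : prf)
| PComp (f g : prf)
| PRec (f g : prf)
| PMu (f : prf).

Inductive prf_eval (p : baire) : prf -> nat -> nat -> Prop :=
| ev_zero x : prf_eval p PZero x 0
| ev_succ x : prf_eval p PSucc x (S x)
| ev_id x : prf_eval p PId x x
| ev_fst x : prf_eval p PFst x (nfst x)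
| ev_snd x : prf_eval p PSnd x (nsnd x)
| ev_orc x : prf_eval p POrc x (p x)
| ev_pair f g x a b :
    prf_eval p f x a -> prf_eval p g x b -> prf_eval p (PPair f g) x (npair a b)
| ev_comp f g x y z :
    prf_eval p g x y -> prf_eval p f y z -> prf_eval p (PComp f g) x z
| ev_rec0 f g x r :
    prf_eval p f x r -> prf_eval p (PRec f g) (npair x 0) r
| ev_recS f g x m r' r :
    prf_eval p (PRec f g) (npair x m) r' ->
    prf_eval p g (npair x (npair m r')) r ->
    prf_eval p (PRec f g) (npair x (S m)) r
| ev_mu f x n :
    prf_eval p f (npair x n) 0 ->
    (forall m, (m < n)%nat -> exists k, k <> 0%nat /\ prf_eval p f (npair x m) k) ->
    prf_eval p (PMu f) x n.

Definition pfun := baire -> baire -> Prop.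
Definition functional (F : pfun) : Prop :=
  forall p q1 q2, F p q1 -> F p q2 -> q1 = q2.

Definition computable (F : pfun) : Prop :=
  functional F /\
  exists M : prf, forall p q, F p q -> forall n, prf_eval p M n (q n).

Definition bpair (p q : baire) : baire :=
  fun i => if Nat.even i then p (Nat.div2 i) else q (Nat.div2 i).

Record RepSpace := {
  carrier :> Type;
  delta : baire -> carrier -> Prop   (* graph of the partial surjection delta *)
}.

(* a partial multi-valued function f :subseteq X => Y, as a relation;
   dom f = { x | exists y, f x y } *)
Definition problem (X Y : RepSpace) := X -> Y -> Prop.

Definition dom_comp {X Y : RepSpace} (f : problem X Y) (p : baire) : Prop :=
  exists x, delta X p x /\ exists y, f x y.

Definition realizes {X Y : RepSpace} (F : pfun) (f : problem X Y) : Prop :=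
  forall p x, delta X p x -> (exists y, f x y) ->
    exists q, F p q /\ exists y, delta Y q y /\ f x y.

Definition realizer {X Y : RepSpace} (G : pfun) (f : problem X Y) : Prop :=
  functional G /\ realizes G f.

Definition W_le {X Y Z W : RepSpace} (f : problem X Y) (g : problem Z W) : Prop :=
  exists H K : pfun, computable H /\ computable K /\
    forall G : pfun, realizer G g ->
      realizes (fun p r => exists q s, K p q /\ G q s /\ H (bpair p s) r) f.

Definition sW_le {X Y Z W : RepSpace} (f : problem X Y) (g : problem Z W) : Prop :=
  exists H K : pfun, computable H /\ computable K /\
    forall G : pfun, realizer G g ->
      realizes (fun p r => exists q s, K p q /\ G q s /\ H s r) f.

Definition W_lt {X Y Z W : RepSpace} (f : problem X Y) (g : problem Z W) : Prop :=
  W_le f g /\ ~ W_le g f.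

Definition word := list bool.

(* bijective coding of binary words by natural numbers *)
Fixpoint wcode (w : word) : nat :=
  match w with
  | [] => 0%nat
  | b :: w' => S (2 * wcode w' + (if b then 1 else 0))
  end.

Definition is_tree (T : word -> bool) : Prop :=
  forall u v, T (u ++ v) = true -> T u = true.

Definition tree := { T : word -> bool | is_tree T }.

(* characteristic-function representation of trees *)
Definition delta_Tr (p : baire) (T : tree) : Prop :=
  forall w, p (wcode w) = (if proj1_sig T w then 1 else 0)%nat.

Definition Tr : RepSpace := {| carrier := tree; delta := delta_Tr |}.

Definition delta_Cantor (p : baire) (x : nat -> bool) : Prop :=
  forall n, p n = (if x n then 1 else 0)%nat.

Definition Cantor2 : RepSpace := {| carrier := nat -> bool; delta := delta_Cantor |}.

(* N x Tr with the standard product representation delta<q,r> = (q(0), delta_Tr r) *)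
Definition delta_NTr (p : baire) (nT : nat * tree) : Prop :=
  p (Nat.double 0) = fst nT /\ delta_Tr (fun i => p (S (Nat.double i))) (snd nT).

Definition NTr : RepSpace := {| carrier := nat * tree; delta := delta_NTr |}.

Definition prefix (x : nat -> bool) (n : nat) : word := map x (seq 0 n).

Definition in_paths (T : tree) (x : nat -> bool) : Prop :=
  forall n, proj1_sig T (prefix x n) = true.

Fixpoint words (k : nat) : list word :=
  match k with
  | O => [ [] ]
  | S k' => flat_map (fun w => [w ++ [false]; w ++ [true]]) (words k')
  end.

Definition level_count (T : tree) (k : nat) : nat :=
  length (filter (proj1_sig T) (words k)).

(* mu([T]) > r.  Since [T] = inter_k U_{w in T, |w|=k} w2^N (decreasing),
   mu([T]) = inf_k level_count T k / 2^k; so mu([T]) > r iff that infimum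
   exceeds r. *)
Definition measure_paths_gt (T : tree) (r : R) : Prop :=
  exists eps : R, 0 < eps /\
    forall k, INR (level_count T k) / 2 ^ k >= r + eps.

Definition WWKL : problem Tr Cantor2 :=
  fun T x => measure_paths_gt T 0 /\ in_paths T x.

Definition starWWKL : problem NTr Cantor2 :=
  fun nT x => measure_paths_gt (snd nT) (/ 2 ^ fst nT) /\ in_paths (snd nT) x.

From Stdlib Require Import Reals Arith List Cantor Lia Lra.
From Stdlib Require Import FunctionalExtensionality Classical ClassicalEpsilon.
Import ListNotations.

(* The strong reduction forgets the bound: the tree of an instance (n, T) of *-WWKL is an
   instance of WWKL.

   Conversely, let H, K reduce WWKL to *-WWKL. On the full tree, K produces an instance (n0, T0).
   Answering paths of T0 and using the continuity of H, there is a level u at which every node t of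
   T0 already fixes the first n0 output bits, cls t, of H. Some v of length n0 equals cls t for at
   most a 2^-n0 fraction of level u. Now feed in the tree of extensions of v, with a name agreeing
   with that of the full tree for a long time: K still produces n0 and a tree equal to T0 up to
   level u, of measure above 2^-n0, hence with a path through some t with cls t <> v. Answering
   that path makes H output a sequence beginning with cls t, which is no extension of v. *)

Lemma nfst_npair a b : nfst (npair a b) = a.
Proof. unfold nfst, npair. now rewrite Cantor.cancel_of_to. Qed.

Lemma nsnd_npair a b : nsnd (npair a b) = b.
Proof. unfold nsnd, npair. now rewrite Cantor.cancel_of_to. Qed.

Lemma npair_inj a b c d : npair a b = npair c d -> a = c /\ b = d.
Proof.
  intros E. split.
  - rewrite <- (nfst_npair a b), <- (nfst_npair c d). now f_equal.
  - rewrite <- (nsnd_npair a b), <- (nsnd_npair c d). now f_equal.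
Qed.

Definition agree_below (p p' : baire) (B : nat) : Prop :=
  forall i, (i < B)%nat -> p' i = p i.

Lemma agree_below_mono p p' B B' : (B <= B')%nat -> agree_below p p' B' -> agree_below p p' B.
Proof. intros Hle H i Hi. apply H. lia. Qed.

Lemma agree_below_bpair p p' s s' B :
  agree_below p p' B -> agree_below s s' B -> agree_below (bpair p s) (bpair p' s') B.
Proof.
  intros Hp Hs i Hi. pose proof (Nat.div2_odd i). unfold bpair.
  destruct (Nat.even i); [apply Hp|apply Hs]; lia.
Qed.

Lemma uniform_bound {A} (P : A -> nat -> Prop) (l : list A) :
  (forall a B B', (B <= B')%nat -> P a B -> P a B') ->
  (forall a, In a l -> exists B, P a B) ->
  exists B, forall a, In a l -> P a B.
Proof.
  intros Hmono. induction l as [|a l IH]; intros Hl.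
  - exists 0%nat. intros a [].
  - destruct (Hl a (or_introl eq_refl)) as [B1 HB1].
    destruct IH as [B2 HB2]. { intros b Hb. apply Hl. now right. }
    exists (max B1 B2). intros b [<-|Hb].
    + apply (Hmono _ B1); [lia|exact HB1].
    + apply (Hmono _ B2); [lia|now apply HB2].
Qed.

Fixpoint prf_eval_use p M x y (E : prf_eval p M x y) {struct E} :
  exists B, forall p', agree_below p p' B -> prf_eval p' M x y.
Proof.
  destruct E.
  1-5: exists 0%nat; intros; constructor.
  - exists (S x). intros p' Hp. rewrite <- (Hp x) by lia. constructor.
  - destruct (prf_eval_use _ _ _ _ E1) as [B1 H1], (prf_eval_use _ _ _ _ E2) as [B2 H2].
    exists (max B1 B2). intros p' Hp. constructor.
    + apply H1. eapply agree_below_mono; [|eauto]; lia.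
    + apply H2. eapply agree_below_mono; [|eauto]; lia.
  - destruct (prf_eval_use _ _ _ _ E1) as [B1 H1], (prf_eval_use _ _ _ _ E2) as [B2 H2].
    exists (max B1 B2). intros p' Hp. econstructor.
    + apply H1. eapply agree_below_mono; [|eauto]; lia.
    + apply H2. eapply agree_below_mono; [|eauto]; lia.
  - destruct (prf_eval_use _ _ _ _ E) as [B1 H1].
    exists B1. intros p' Hp. constructor. auto.
  - destruct (prf_eval_use _ _ _ _ E1) as [B1 H1], (prf_eval_use _ _ _ _ E2) as [B2 H2].
    exists (max B1 B2). intros p' Hp. econstructor.
    + apply H1. eapply agree_below_mono; [|eauto]; lia.
    + apply H2. eapply agree_below_mono; [|eauto]; lia.
  - destruct (prf_eval_use _ _ _ _ E) as [B1 H1].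
    destruct (uniform_bound (fun m B => forall p', agree_below p p' B ->
                exists k, k <> 0%nat /\ prf_eval p' f (npair x m) k) (seq 0 n)) as [B2 H2].
    + intros m B B' Hle HP p' Hp. apply HP. eapply agree_below_mono; eauto.
    + intros m Hm. apply in_seq in Hm.
      destruct (H m ltac:(lia)) as [k [Hk Ek]].
      destruct (prf_eval_use _ _ _ _ Ek) as [B3 H3].
      exists B3. intros p' Hp. exists k. auto.
    + exists (max B1 B2). intros p' Hp. constructor.
      * apply H1. eapply agree_below_mono; [|eauto]; lia.
      * intros m Hm. apply (H2 m); [apply in_seq; lia|].
        eapply agree_below_mono; [|eauto]; lia.
Qed.

Fixpoint prf_eval_det p M x y1 (E : prf_eval p M x y1) {struct E} :
  forall y2, prf_eval p M x y2 -> y1 = y2.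
Proof.
  destruct E; intros y2 F.
  1-6: now inversion F.
  - inversion F; subst. f_equal; eapply prf_eval_det; eauto.
  - inversion F; subst.
    pose proof (prf_eval_det _ _ _ _ E1 _ H1); subst.
    eapply prf_eval_det; eauto.
  - remember (npair x 0) as z eqn:Hz. remember (PRec f g) as M eqn:HM.
    destruct F; try discriminate; injection HM as <- <-;
      apply npair_inj in Hz; destruct Hz as [<- Hm]; [|discriminate].
    eapply prf_eval_det; eauto.
  - remember (npair x (S m)) as z eqn:Hz. remember (PRec f g) as M eqn:HM.
    destruct F; try discriminate; injection HM as <- <-;
      apply npair_inj in Hz; destruct Hz as [<- Hm]; [discriminate|].
    injection Hm as <-.
    pose proof (prf_eval_det _ _ _ _ E1 _ F1); subst.
    eapply prf_eval_det; eauto.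
  - inversion F; subst.
    destruct (lt_eq_lt_dec n y2) as [[Hlt|Heq]|Hgt]; auto.
    + destruct (H2 n Hlt) as [k [Hk Ek]].
      pose proof (prf_eval_det _ _ _ _ E _ Ek). congruence.
    + destruct (H y2 Hgt) as [k [Hk Ek]].
      pose proof (prf_eval_det _ _ _ _ Ek _ H1). congruence.
Qed.

Lemma computable_use (K : pfun) (M : prf) p q N :
  (forall p q, K p q -> forall n, prf_eval p M n (q n)) -> K p q ->
  exists B, forall p' q', agree_below p p' B -> K p' q' -> agree_below q q' N.
Proof.
  intros HM Hpq.
  destruct (uniform_bound (fun i B => forall p', agree_below p p' B -> prf_eval p' M i (q i)) (seq 0 N))
    as [B HB].
  - intros i B B' Hle HP p' Hp. apply HP. eapply agree_below_mono; eauto.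
  - intros i _. apply prf_eval_use, HM, Hpq.
  - exists B. intros p' q' Hp Hq' i Hi.
    eapply prf_eval_det; [apply (HM _ _ Hq')|]. apply HB; [apply in_seq; lia|exact Hp].
Qed.

Definition odd_part (p : baire) : baire := fun i => p (S (Nat.double i)).

Lemma odd_part_bpair p s : odd_part (bpair p s) = s.
Proof.
  apply functional_extensionality. intro i. unfold odd_part, bpair, Nat.double.
  replace (S (i + i)) with (S (2 * i)) by lia.
  rewrite Nat.div2_succ_double, Nat.even_succ, Nat.odd_mul. reflexivity.
Qed.

Definition MAdd : prf := PRec PId (PComp PSucc (PComp PSnd PSnd)).
(* [MOdd] queries the oracle at [S (i + i)], the sum computed by recursion in [MAdd]. *)
Definition MOdd : prf := PComp POrc (PComp PSucc (PComp MAdd (PPair PId PId))).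

Lemma MAdd_spec p x m : prf_eval p MAdd (npair x m) (x + m).
Proof.
  induction m as [|m IH].
  - rewrite Nat.add_0_r. do 2 constructor.
  - eapply ev_recS; [exact IH|]. rewrite Nat.add_succ_r.
    assert (Hsnd : forall z y, nsnd z = y -> prf_eval p PSnd z y) by (intros z y <-; constructor).
    econstructor; [|constructor].
    apply ev_comp with (y := npair m (x + m)); apply Hsnd; apply nsnd_npair.
Qed.

Lemma odd_part_computable : computable (fun p q => q = odd_part p).
Proof.
  split; [now intros p q1 q2 -> ->|].
  exists MOdd. intros p q -> n. unfold MOdd, odd_part.
  econstructor; [|constructor]. econstructor; [|constructor].
  econstructor; [do 2 constructor|apply MAdd_spec].
Qed.

Lemma id_computable : computable (fun p q => q = p).
Proof.
  split; [now intros p q1 q2 -> ->|].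
  exists POrc. intros p q -> n. constructor.
Qed.

(* The tree of an instance of *-WWKL is named by the odd part of its name. *)
Lemma WWKL_solves_starWWKL G p nT :
  realizer G WWKL -> delta_NTr p nT -> (exists y, starWWKL nT y) ->
  exists s, G (odd_part p) s /\ exists y, delta_Cantor s y /\ starWWKL nT y.
Proof.
  intros [_ HG] [_ HT] [y [Hm Hy]].
  destruct (HG _ (snd nT) HT) as [s [Gs [z [Hz [_ Hzp]]]]].
  - exists y. split; [|exact Hy].
    destruct Hm as [eps [He Hk]]. exists eps. split; [exact He|].
    intro k. specialize (Hk k).
    assert (0 < / 2 ^ fst nT) by (apply Rinv_0_lt_compat, pow_lt; lra). lra.
  - exists s. split; [exact Gs|]. exists z. split; [exact Hz|]. split; [exact Hm|exact Hzp].
Qed.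

Lemma starWWKL_sW_le_WWKL : sW_le starWWKL WWKL.
Proof.
  exists (fun s r => r = s), (fun p q => q = odd_part p).
  split; [apply id_computable|]. split; [apply odd_part_computable|].
  intros G HG p nT Hp Hdom.
  destruct (WWKL_solves_starWWKL G p nT HG Hp Hdom) as [s [Gs Hs]].
  exists s. split; [now exists (odd_part p), s|exact Hs].
Qed.

Lemma starWWKL_W_le_WWKL : W_le starWWKL WWKL.
Proof.
  exists (fun ps r => r = odd_part ps), (fun p q => q = odd_part p).
  split; [apply odd_part_computable|]. split; [apply odd_part_computable|].
  intros G HG p nT Hp Hdom.
  destruct (WWKL_solves_starWWKL G p nT HG Hp Hdom) as [s [Gs Hs]].
  exists s. split; [|exact Hs].
  exists (odd_part p), s. rewrite odd_part_bpair. auto.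
Qed.

Definition count {A} (P : A -> bool) (l : list A) : nat := length (filter P l).

Lemma count_mono_in {A} (P Q : A -> bool) l :
  (forall a, In a l -> P a = true -> Q a = true) -> (count P l <= count Q l)%nat.
Proof.
  unfold count. induction l as [|a l IH]; intros H; simpl; [lia|].
  specialize (IH (fun b Hb => H b (or_intror Hb))).
  destruct (P a) eqn:Ea.
  - rewrite (H a (or_introl eq_refl) Ea). simpl. lia.
  - destruct (Q a); simpl; lia.
Qed.

Lemma count_disjoint_le {A} (P Q R : A -> bool) l :
  (forall a, P a = true -> Q a = true -> False) ->
  (forall a, P a = true -> R a = true) -> (forall a, Q a = true -> R a = true) ->
  (count P l + count Q l <= count R l)%nat.
Proof.
  unfold count. intros HPQ HP HQ. induction l as [|a l IH]; simpl; [lia|].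
  destruct (P a) eqn:Ea, (Q a) eqn:Eb.
  - exfalso; eauto.
  - rewrite (HP a Ea). simpl. lia.
  - rewrite (HQ a Eb). simpl. lia.
  - destruct (R a); simpl; lia.
Qed.

Lemma count_pos {A} (P : A -> bool) l a : In a l -> P a = true -> (1 <= count P l)%nat.
Proof.
  intros Hin Ha. unfold count.
  assert (Hf : In a (filter P l)) by (apply filter_In; auto).
  destruct (filter P l); [destruct Hf|simpl; lia].
Qed.

Lemma count_filter {A} (P Q : A -> bool) l :
  count P (filter Q l) = count (fun a => Q a && P a)%bool l.
Proof.
  unfold count. induction l as [|a l IH]; simpl; [reflexivity|].
  destruct (Q a); simpl; [destruct (P a); simpl|]; auto.
Qed.

Definition weq (a b : word) : bool := if list_eq_dec Bool.bool_dec a b then true else false.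

Lemma weq_spec a b : weq a b = true <-> a = b.
Proof. unfold weq. destruct list_eq_dec; split; congruence. Qed.

Lemma In_words k w : In w (words k) <-> length w = k.
Proof.
  revert w; induction k as [|k IH]; intros w; simpl; split.
  - now intros [<-|[]].
  - destruct w; [now left|discriminate].
  - rewrite in_flat_map. intros [w' [Hw' [<-|[<-|[]]]]];
      rewrite length_app, (proj1 (IH w') Hw'); simpl; lia.
  - intros Hw. destruct (exists_last (l := w)) as [w' [b ->]]; [now intros ->|].
    rewrite length_app in Hw. simpl in Hw.
    apply in_flat_map. exists w'. split; [apply IH; lia|].
    destruct b; simpl; auto.
Qed.

Lemma length_words k : length (words k) = (2 ^ k)%nat.
Proof.
  induction k as [|k IH]; [reflexivity|]. simpl.
  assert (Hdup : forall l : list word,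
            length (flat_map (fun w => [w ++ [false]; w ++ [true]]) l) = (2 * length l)%nat).
  { induction l; simpl; [reflexivity|]. rewrite IHl. lia. }
  rewrite Hdup, IH. lia.
Qed.

Lemma count_extensions (P : word -> bool) m d :
  count (fun w => P (firstn m w)) (words (m + d)) = (count P (words m) * 2 ^ d)%nat.
Proof.
  unfold count. induction d as [|d IH].
  - rewrite Nat.add_0_r, Nat.mul_1_r. f_equal. apply filter_ext_in.
    intros w Hw. apply In_words in Hw. now rewrite firstn_all2 by lia.
  - rewrite Nat.add_succ_r. simpl (words (S _)).
    assert (Hdup : forall l : list word, (forall w, In w l -> m <= length w)%nat ->
      length (filter (fun w => P (firstn m w)) (flat_map (fun w => [w ++ [false]; w ++ [true]]) l))
      = (2 * length (filter (fun w => P (firstn m w)) l))%nat).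
    { induction l as [|a l IHl]; intros Hl; [reflexivity|].
      assert (Hf : forall b, firstn m (a ++ [b]) = firstn m a).
      { intro b. rewrite firstn_app.
        replace (m - length a)%nat with 0%nat by (specialize (Hl a (or_introl eq_refl)); lia).
        apply app_nil_r. }
      change (flat_map ?g (a :: l)) with (g a ++ flat_map g l).
      rewrite filter_app, length_app, IHl by (intros; apply Hl; now right).
      simpl. rewrite !Hf. destruct (P (firstn m a)); simpl; lia. }
    rewrite Hdup, IH; [simpl; lia|].
    intros w Hw. apply In_words in Hw. lia.
Qed.

(* Induction on n: one of [v ++ [false]], [v ++ [true]] takes at most half the count of [v]. *)
Lemma pigeonhole_prefix {A} (l : list A) (f : A -> word) n :
  exists v, length v = n /\
    (count (fun a => weq (firstn n (f a)) v) l * 2 ^ n <= length l)%nat.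
Proof.
  induction n as [|n [v [Hv Hc]]].
  - exists []. split; [reflexivity|]. unfold count. simpl.
    rewrite Nat.mul_1_r. apply filter_length_le.
  - set (c b := count (fun a => weq (firstn (S n) (f a)) (v ++ [b])) l).
    assert (Hsplit : (c false + c true <= count (fun a => weq (firstn n (f a)) v) l)%nat).
    { assert (Hshort : forall a b, weq (firstn (S n) (f a)) (v ++ [b]) = true ->
                         weq (firstn n (f a)) v = true).
      { intros a b Hab. apply weq_spec in Hab. apply weq_spec.
        replace (firstn n (f a)) with (firstn n (firstn (S n) (f a)))
          by (rewrite firstn_firstn, Nat.min_l by lia; reflexivity).
        rewrite Hab, firstn_app, Hv, Nat.sub_diag, app_nil_r. apply firstn_all2. lia. }
      apply count_disjoint_le; [|eauto|eauto].
      intros a H0 H1. apply weq_spec in H0, H1. rewrite H0 in H1.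
      apply app_inv_head in H1. discriminate. }
    rewrite Nat.pow_succ_r'.
    destruct (Nat.le_ge_cases (c false) (c true)) as [Hle|Hle];
      [exists (v ++ [false])|exists (v ++ [true])];
      (split; [rewrite length_app, Hv; simpl; lia|]); fold (c false) (c true); nia.
Qed.

Lemma prefix_length x n : length (prefix x n) = n.
Proof. unfold prefix. now rewrite length_map, length_seq. Qed.

Lemma prefix_nth x n i d : (i < n)%nat -> nth i (prefix x n) d = x i.
Proof.
  intros H. unfold prefix.
  rewrite nth_indep with (d' := x 0%nat) by (now rewrite length_map, length_seq).
  now rewrite map_nth, seq_nth.
Qed.

Lemma prefix_S x n : prefix x (S n) = prefix x n ++ [x n].
Proof. unfold prefix. now rewrite seq_S, map_app. Qed.

Lemma firstn_prefix x m n : (m <= n)%nat -> firstn m (prefix x n) = prefix x m.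
Proof.
  intros H. apply nth_ext with (d := false) (d' := false).
  - now rewrite length_firstn, !prefix_length, Nat.min_l.
  - intros i Hi. rewrite length_firstn, prefix_length in Hi.
    rewrite nth_firstn, !prefix_nth by lia.
    now replace (i <? m)%nat with true by (symmetry; apply Nat.ltb_lt; lia).
Qed.

Lemma prefix_of_word v n : (n <= length v)%nat -> prefix (fun i => nth i v false) n = firstn n v.
Proof.
  intros H. apply nth_ext with (d := false) (d' := false).
  - rewrite prefix_length, length_firstn. lia.
  - intros i Hi. rewrite prefix_length in Hi.
    rewrite prefix_nth, nth_firstn by lia.
    now replace (i <? n)%nat with true by (symmetry; apply Nat.ltb_lt; lia).
Qed.

Definition prefix_closed (P : word -> Prop) : Prop := forall u v, P (u ++ v) -> P u.

(* König's lemma: always extend by a bit that keeps arbitrarily long extensions available. *)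
Lemma koenig (P : word -> Prop) : prefix_closed P ->
  (forall k, exists w, length w = k /\ P w) ->
  exists x : nat -> bool, forall n, P (prefix x n).
Proof.
  intros Hc Hall.
  set (Inf w := forall k, exists w', length w' = k /\ P (w ++ w')).
  assert (Hstep : forall w, Inf w -> Inf (w ++ [false]) \/ Inf (w ++ [true])).
  { intros w Hw. apply NNPP. intros [H0 H1]%not_or_and.
    apply not_all_ex_not in H0 as [k0 H0]. apply not_all_ex_not in H1 as [k1 H1].
    destruct (Hw (S (max k0 k1))) as [[|b w'] [Hl Hp]]; [discriminate|]. simpl in Hl.
    destruct b; [apply H1; exists (firstn k1 w')|apply H0; exists (firstn k0 w')];
      (split; [rewrite length_firstn; lia|]);
      eapply Hc; rewrite <- !app_assoc; simpl; rewrite firstn_skipn; exact Hp. }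
  set (ch w := if excluded_middle_informative (Inf (w ++ [false])) then false else true).
  assert (Hch : forall w, Inf w -> Inf (w ++ [ch w])).
  { intros w Hw. unfold ch. destruct excluded_middle_informative; [assumption|].
    destruct (Hstep w Hw); tauto. }
  set (pre := fix pre n := match n with O => [] | S n' => pre n' ++ [ch (pre n')] end).
  assert (Hpre : forall n, Inf (pre n)).
  { induction n as [|n IH]; [|now apply Hch].
    intro k. destruct (Hall k) as [w Hw]. now exists w. }
  assert (Hplen : forall n, length (pre n) = n).
  { induction n as [|n IH]; simpl; [reflexivity|]. rewrite length_app, IH. simpl. lia. }
  exists (fun n => nth n (pre (S n)) false).
  assert (Heq : forall n, prefix (fun n => nth n (pre (S n)) false) n = pre n).
  { induction n as [|n IH]; [reflexivity|]. rewrite prefix_S, IH.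
    simpl (pre (S n)) at 2. do 2 f_equal. simpl.
    rewrite app_nth2, Hplen, Nat.sub_diag by (rewrite Hplen; lia). reflexivity. }
  intro n. rewrite Heq. destruct (Hpre n 0%nat) as [[|] [Hl Hp]]; [|discriminate].
  now rewrite app_nil_r in Hp.
Qed.

Definition b2n (b : bool) : nat := if b then 1%nat else 0%nat.

Lemma b2n_inj a b : b2n a = b2n b -> a = b.
Proof. destruct a, b; simpl; congruence. Qed.

Definition name (x : nat -> bool) : baire := fun n => b2n (x n).

Lemma name_spec x : delta_Cantor (name x) x.
Proof. intro n. reflexivity. Qed.

(* [wdecf f] inverts [wcode] on codes at most the fuel [f]. *)
Fixpoint wdecf (f c : nat) : word :=
  match f, c with
  | S f', S c' => Nat.odd c' :: wdecf f' (Nat.div2 c')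
  | _, _ => []
  end.

Definition wdec (c : nat) : word := wdecf c c.

Lemma length_wdecf f c : (length (wdecf f c) <= f)%nat.
Proof.
  revert c; induction f as [|f IH]; intros [|c]; simpl; try lia.
  specialize (IH (Nat.div2 c)). lia.
Qed.

Lemma wdecf_wcode w f : (wcode w <= f)%nat -> wdecf f (wcode w) = w.
Proof.
  revert f; induction w as [|b w IH]; intros [|f] Hf; simpl in *; try easy.
  replace (wcode w + (wcode w + 0) + (if b then 1 else 0))%nat
    with (if b then S (2 * wcode w) else 2 * wcode w)%nat by (destruct b; lia).
  destruct b.
  - rewrite Nat.odd_succ, Nat.even_mul, Nat.div2_succ_double, IH by lia. reflexivity.
  - rewrite Nat.odd_mul, Nat.div2_double, IH by lia. reflexivity.
Qed.

Lemma wdec_wcode w : wdec (wcode w) = w.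
Proof. now apply wdecf_wcode. Qed.

Lemma wcode_bound w : (wcode w + 2 <= 2 ^ (length w + 1))%nat.
Proof.
  induction w as [|b w IH]; [cbn; lia|].
  change (length (b :: w) + 1)%nat with (S (length w + 1)).
  rewrite Nat.pow_succ_r'. simpl wcode. destruct b; lia.
Qed.

Definition tree_name (T : tree) : baire := fun c => b2n (proj1_sig T (wdec c)).

Lemma tree_name_spec T : delta_Tr (tree_name T) T.
Proof. intro w. unfold tree_name. now rewrite wdec_wcode. Qed.

Lemma delta_Tr_functional r T1 T2 :
  delta_Tr r T1 -> delta_Tr r T2 -> forall w, proj1_sig T1 w = proj1_sig T2 w.
Proof.
  intros H1 H2 w. apply b2n_inj. unfold b2n. now rewrite <- H1, <- H2.
Qed.

Lemma in_paths_ext T1 T2 x :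
  (forall w, proj1_sig T1 w = proj1_sig T2 w) -> in_paths T1 x -> in_paths T2 x.
Proof. intros H Hx n. rewrite <- H. apply Hx. Qed.

Lemma full_is_tree : is_tree (fun _ => true).
Proof. intros u v _. reflexivity. Qed.

Definition Tfull : tree := exist _ (fun _ => true) full_is_tree.

Lemma tree_name_agree_full (T : tree) lam :
  (forall w, (length w < lam)%nat -> proj1_sig T w = true) ->
  agree_below (tree_name Tfull) (tree_name T) lam.
Proof.
  intros H c Hc. unfold tree_name. rewrite H; [reflexivity|].
  pose proof (length_wdecf c c). unfold wdec. lia.
Qed.


Lemma level_count_lower (T : tree) n k :
  measure_paths_gt T (/ 2 ^ n) -> (2 ^ k < level_count T k * 2 ^ n)%nat.
Proof.
  intros [eps [He Hk]]. specialize (Hk k).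
  apply INR_lt. rewrite mult_INR, !pow_INR. change (INR 2) with 2.
  assert (0 < 2 ^ k) by (apply pow_lt; lra). assert (0 < 2 ^ n) by (apply pow_lt; lra).
  apply Rmult_lt_reg_r with (/ 2 ^ k * / 2 ^ n).
  { apply Rmult_lt_0_compat; apply Rinv_0_lt_compat; lra. }
  replace (2 ^ k * (/ 2 ^ k * / 2 ^ n)) with (/ 2 ^ n) by (field; lra).
  replace (INR (level_count T k) * 2 ^ n * (/ 2 ^ k * / 2 ^ n))
    with (INR (level_count T k) / 2 ^ k) by (field; lra).
  lra.
Qed.

Lemma measure_pos_of_level_count (T : tree) n :
  (forall k, 2 ^ k <= level_count T k * 2 ^ n)%nat -> measure_paths_gt T 0.
Proof.
  intros Hk. exists (/ 2 ^ n). split; [apply Rinv_0_lt_compat, pow_lt; lra|].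
  intro k. specialize (Hk k). apply le_INR in Hk.
  rewrite mult_INR, !pow_INR in Hk. change (INR 2) with 2 in Hk.
  assert (0 < 2 ^ k) by (apply pow_lt; lra). assert (0 < 2 ^ n) by (apply pow_lt; lra).
  rewrite Rplus_0_l. apply Rle_ge.
  apply Rmult_le_reg_r with (2 ^ k * 2 ^ n); [nra|].
  replace (/ 2 ^ n * (2 ^ k * 2 ^ n)) with (2 ^ k) by (field; lra).
  replace (INR (level_count T k) / 2 ^ k * (2 ^ k * 2 ^ n))
    with (INR (level_count T k) * 2 ^ n) by (field; lra).
  lra.
Qed.

Lemma Tfull_WWKL : exists y, WWKL Tfull y.
Proof.
  exists (fun _ => false). split; [|intro n; reflexivity].
  apply (measure_pos_of_level_count _ 0). intro k.
  unfold level_count. simpl. rewrite filter_true, length_words. lia.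
Qed.

(* It contains every word shorter than [lam + length v], so its name agrees with that of the full
   tree on all codes below [lam]; its paths are exactly the extensions of [v]. *)
Definition cylinder_fun (lam : nat) (v w : word) : bool :=
  (length w <? lam + length v)%nat || weq (firstn (length v) w) v.

Lemma cylinder_is_tree lam v : is_tree (cylinder_fun lam v).
Proof.
  intros u w. unfold cylinder_fun. rewrite !Bool.orb_true_iff, !Nat.ltb_lt, length_app.
  intros [H|H]; [left; lia|].
  destruct (Nat.lt_ge_cases (length u) (lam + length v)) as [Hu|Hu]; [now left|right].
  rewrite firstn_app in H. replace (length v - length u)%nat with 0%nat in H by lia.
  now rewrite app_nil_r in H.
Qed.

Definition cylinder (lam : nat) (v : word) : tree := exist _ _ (cylinder_is_tree lam v).

Lemma cylinder_below lam v w :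
  (length w < lam + length v)%nat -> proj1_sig (cylinder lam v) w = true.
Proof. intros Hw. simpl. unfold cylinder_fun. apply Bool.orb_true_iff. left. now apply Nat.ltb_lt. Qed.

Lemma cylinder_WWKL lam v : exists y, WWKL (cylinder lam v) y.
Proof.
  exists (fun i => nth i v false). split.
  - apply (measure_pos_of_level_count _ (length v)). intro k.
    destruct (Nat.lt_ge_cases k (lam + length v)) as [Hk|Hk].
    + unfold level_count. rewrite (filter_ext_in _ (fun _ => true)).
      * rewrite filter_true, length_words. pose proof (Nat.pow_nonzero 2 (length v)). nia.
      * intros w Hw. apply In_words in Hw. apply cylinder_below. lia.
    + assert (Hcount : (count (fun w => weq (firstn (length v) w) v) (words (length v + (k - length v)))
                        <= level_count (cylinder lam v) k)%nat).
      { replace (length v + (k - length v))%nat with k by lia.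
        apply count_mono_in. intros w _ Hw. simpl. unfold cylinder_fun.
        now rewrite Hw, Bool.orb_true_r. }
      rewrite (count_extensions (fun w => weq w v)) in Hcount.
      assert (Hv : (1 <= count (fun w => weq w v) (words (length v)))%nat).
      { apply count_pos with v; [now apply In_words|now apply weq_spec]. }
      replace (2 ^ k)%nat with (2 ^ (k - length v) * 2 ^ length v)%nat
        by (rewrite <- Nat.pow_add_r; f_equal; lia).
      nia.
  - intro n. simpl. unfold cylinder_fun. apply Bool.orb_true_iff.
    destruct (Nat.lt_ge_cases n (lam + length v)) as [Hn|Hn].
    + left. apply Nat.ltb_lt. now rewrite prefix_length.
    + right. apply weq_spec. rewrite firstn_prefix, prefix_of_word, firstn_all by lia. reflexivity.
Qed.

Lemma cylinder_path_prefix lam v y : in_paths (cylinder lam v) y -> prefix y (length v) = v.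
Proof.
  intros Hy. specialize (Hy (lam + length v)%nat). simpl in Hy. unfold cylinder_fun in Hy.
  rewrite prefix_length, Nat.ltb_irrefl in Hy. simpl in Hy.
  apply weq_spec in Hy. now rewrite firstn_prefix in Hy by lia.
Qed.

(* If the u-prefixes in [P] cover at most a 2^-n fraction of level u while [T] has measure above
   2^-n, then the words of [T] avoiding [P] at level u exist at every level; König gives a path. *)
Lemma measure_path_avoiding (T : tree) n u (P : word -> bool) :
  measure_paths_gt T (/ 2 ^ n) -> (count P (words u) * 2 ^ n <= 2 ^ u)%nat ->
  exists x, in_paths T x /\ P (prefix x u) = false.
Proof.
  intros HT HP.
  assert (Havoid : forall k, exists w, length w = (u + k)%nat /\
                     proj1_sig T w = true /\ P (firstn u w) = false).
  { intro k. apply NNPP. intros Hnone.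
    assert (Hle : (level_count T (u + k) <= count (fun w => P (firstn u w)) (words (u + k)))%nat).
    { apply count_mono_in. intros w Hw HTw. apply In_words in Hw.
      destruct (P (firstn u w)) eqn:E; [reflexivity|]. exfalso. eauto. }
    rewrite count_extensions in Hle.
    pose proof (level_count_lower T n (u + k) HT) as Hlow.
    rewrite Nat.pow_add_r in Hlow. nia. }
  destruct (koenig (fun w => proj1_sig T w = true /\
                  ((length w <= u)%nat \/ P (firstn u w) = false))) as [x Hx].
  - intros a b [Hab Hb]. split; [exact (proj2_sig T a b Hab)|].
    destruct (Nat.le_gt_cases (length a) u) as [Ha|Ha]; [now left|right].
    destruct Hb as [Hb|Hb]; [rewrite length_app in Hb; lia|].
    rewrite firstn_app in Hb. replace (u - length a)%nat with 0%nat in Hb by lia.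
    now rewrite app_nil_r in Hb.
  - intro k. destruct (Havoid k) as [w [Hl [Hw HPw]]].
    exists (firstn k w). split; [rewrite length_firstn; lia|].
    split; [apply (proj2_sig T _ (skipn k w)); now rewrite firstn_skipn|].
    destruct (Nat.le_gt_cases k u) as [Hk|Hk]; [left; rewrite length_firstn; lia|right].
    now rewrite firstn_firstn, Nat.min_l by lia.
  - exists x. split; [intro n'; apply Hx|].
    destruct (Hx (S u)) as [_ [Hl|Hb]]; [rewrite prefix_length in Hl; lia|].
    now rewrite firstn_prefix in Hb by lia.
Qed.

Definition some_path (q : baire) : baire :=
  match excluded_middle_informative (exists x, forall nT, delta_NTr q nT -> in_paths (snd nT) x) with
  | left Hx => name (proj1_sig (constructive_indefinite_description _ Hx))
  | right _ => fun _ => 0%nat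
  end.

(* Answers [xs] on the instance named [qs] when that is legitimate, and some valid path elsewhere,
   so that it is a realizer in every case. *)
Definition rigged (qs : baire) (xs : nat -> bool) : pfun := fun q s =>
  dom_comp starWWKL q /\
  s = if excluded_middle_informative (q = qs /\ forall nT, delta_NTr q nT -> in_paths (snd nT) xs)
      then name xs else some_path q.

Lemma rigged_realizer qs xs : realizer (rigged qs xs) starWWKL.
Proof.
  split; [now intros q s1 s2 [_ ->] [_ ->]|].
  intros p nT Hp Hdom. eexists. split; [split; [now exists nT|reflexivity]|].
  destruct Hdom as [y0 [Hm Hy0]].
  destruct excluded_middle_informative as [[_ Hxs]|_].
  - exists xs. split; [apply name_spec|]. split; [exact Hm|]. now apply Hxs.
  - unfold some_path. destruct excluded_middle_informative as [Hx|Hnx].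
    + destruct constructive_indefinite_description as [x Hx']. simpl.
      exists x. split; [apply name_spec|]. split; [exact Hm|]. now apply Hx'.
    + exfalso. apply Hnx. exists y0. intros nT' Hp'.
      eapply in_paths_ext; [|exact Hy0]. eapply delta_Tr_functional; [apply Hp|apply Hp'].
Qed.

Lemma rigged_answer qs xs s :
  (forall nT, delta_NTr qs nT -> in_paths (snd nT) xs) -> rigged qs xs qs s -> s = name xs.
Proof.
  intros Hxs [_ ->]. destruct excluded_middle_informative as [_|Hn]; [reflexivity|].
  exfalso. now apply Hn.
Qed.

Section NoReduction.

Variables (H K : pfun) (MH MK : prf).
Hypothesis H_by_MH : forall p r, H p r -> forall n, prf_eval p MH n (r n).
Hypothesis K_functional : functional K.
Hypothesis K_by_MK : forall p q, K p q -> forall n, prf_eval p MK n (q n).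
Hypothesis reduction : forall G, realizer G starWWKL ->
  realizes (fun p r => exists q s, K p q /\ G q s /\ H (bpair p s) r) WWKL.

Lemma reduction_run p T qs xs : delta_Tr p T -> (exists y, WWKL T y) ->
  exists q s r, K p q /\ rigged qs xs q s /\ H (bpair p s) r /\
    exists y, delta_Cantor r y /\ in_paths T y.
Proof.
  intros Hp Hdom.
  destruct (reduction _ (rigged_realizer qs xs) p T Hp Hdom)
    as [r [[q [s [Hq [Hs Hr]]]] [y [Hy [_ HyT]]]]].
  exists q, s, r. split; [exact Hq|]. split; [exact Hs|]. split; [exact Hr|]. now exists y.
Qed.

Lemma reduction_instance p T : delta_Tr p T -> (exists y, WWKL T y) ->
  exists q, K p q /\ dom_comp starWWKL q.
Proof.
  intros Hp Hdom. destruct (reduction_run p T p (fun _ => false) Hp Hdom)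
    as [q [s [_ [Hq [[Hdq _] _]]]]].
  now exists q.
Qed.

Lemma reduction_answer p T q xs : delta_Tr p T -> (exists y, WWKL T y) -> K p q ->
  (forall nT, delta_NTr q nT -> in_paths (snd nT) xs) ->
  exists r, H (bpair p (name xs)) r /\ exists y, delta_Cantor r y /\ in_paths T y.
Proof.
  intros Hp Hdom Hq Hxs.
  destruct (reduction_run p T q xs Hp Hdom) as [q' [s [r [Hq' [Hs [Hr Hy]]]]]].
  rewrite <- (K_functional _ _ _ Hq Hq') in Hs.
  rewrite (rigged_answer _ _ _ Hxs Hs) in Hr. now exists r.
Qed.

Definition Tfull_name : baire := tree_name Tfull.

Section FullTreeRun.

Variables (q0 : baire) (T0 : tree).
Hypothesis K_q0 : K Tfull_name q0.
Hypothesis T0_named : delta_Tr (odd_part q0) T0.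

Let n0 := q0 0%nat.

Definition matches (s : baire) (t : word) : Prop :=
  forall i, (i < length t)%nat -> s i = b2n (nth i t false).

(* [H] fixes its first [n0] output bits to [v] as soon as its oracle agrees with [Tfull_name]
   below [B] and the *-WWKL answer begins with [t]. *)
Definition decides (t v : word) (B : nat) : Prop :=
  length v = n0 /\
  forall p s, agree_below Tfull_name p B -> matches s t ->
    forall i, (i < n0)%nat -> prf_eval (bpair p s) MH i (b2n (nth i v false)).

Lemma decides_app t t' v B : decides t v B -> decides (t ++ t') v B.
Proof.
  intros [Hv Hdec]. split; [exact Hv|]. intros p s Hp Hs. apply Hdec; [exact Hp|].
  intros i Hi. rewrite Hs, app_nth1 by (rewrite ?length_app; lia). reflexivity.
Qed.

Lemma decides_mono t v B B' : (B <= B')%nat -> decides t v B -> decides t v B'.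
Proof.
  intros Hle [Hv Hdec]. split; [exact Hv|]. intros p s Hp. apply Hdec.
  eapply agree_below_mono; eauto.
Qed.

(* Otherwise König gives a path x of T0 no prefix of which is decided; answering x on q0
   makes [H] halt after reading only a finite prefix of x. *)
Lemma T0_level_decided : exists u, forall t, length t = u -> proj1_sig T0 t = true ->
  exists v B, decides t v B.
Proof.
  apply NNPP. intros Hnone.
  destruct (koenig (fun t => proj1_sig T0 t = true /\ ~ exists v B, decides t v B)) as [x Hx].
  - intros a b [Hab Hb]. split; [exact (proj2_sig T0 a b Hab)|].
    intros [v [B Hd]]. apply Hb. exists v, B. now apply decides_app.
  - intro k. apply NNPP. intros Hk. apply Hnone. exists k. intros t Ht HTt.
    apply NNPP. intros Hd. apply Hk. now exists t.
  - destruct (reduction_answer Tfull_name Tfull q0 x (tree_name_spec Tfull) Tfull_WWKL K_q0)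
      as [r [Hr [y [Hy _]]]].
    { intros nT HnT n. erewrite <- delta_Tr_functional; [apply Hx|exact T0_named|apply HnT]. }
    destruct (uniform_bound (fun i B => forall p', agree_below (bpair Tfull_name (name x)) p' B ->
                prf_eval p' MH i (r i)) (seq 0 n0)) as [B HB].
    + intros i B B' Hle HP p' Hp. apply HP. eapply agree_below_mono; eauto.
    + intros i _. apply prf_eval_use, H_by_MH, Hr.
    + apply (proj2 (Hx B)). exists (prefix y n0), B. split; [apply prefix_length|].
      intros p s Hp Hs i Hi. rewrite prefix_nth by exact Hi.
      replace (b2n (y i)) with (r i) by apply Hy.
      apply HB; [apply in_seq; lia|]. apply agree_below_bpair; [exact Hp|].
      intros j Hj. rewrite Hs by (now rewrite prefix_length). now rewrite prefix_nth.
Qed.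

Lemma T0_level_decided_uniform : exists u (cls : word -> word) B,
  forall t, length t = u -> proj1_sig T0 t = true -> decides t (cls t) B.
Proof.
  destruct T0_level_decided as [u Hu]. exists u.
  set (cls t := epsilon (inhabits []) (fun v => exists B, decides t v B)).
  exists cls.
  destruct (uniform_bound (fun t B => proj1_sig T0 t = true -> decides t (cls t) B) (words u))
    as [B HB].
  - intros t B B' Hle HP HT. eapply decides_mono; eauto.
  - intros t Ht. apply In_words in Ht.
    destruct (classic (proj1_sig T0 t = true)) as [HT|HT]; [|exists 0%nat; tauto].
    destruct (epsilon_spec (inhabits (A := word) []) (fun v => exists B, decides t v B)) as [B HB].
    + destruct (Hu t Ht HT) as [v [B Hd]]. now exists v, B.
    + exists B. intros _. exact HB.
  - exists B. intros t Ht HT. apply HB; [now apply In_words|exact HT].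
Qed.

Lemma K_stable_near_Tfull u : exists BK, forall p q nT,
  agree_below Tfull_name p BK -> K p q -> delta_NTr q nT ->
  fst nT = n0 /\ forall t, length t = u -> proj1_sig (snd nT) t = proj1_sig T0 t.
Proof.
  destruct (computable_use K MK Tfull_name q0 (2 ^ (u + 2)) K_by_MK K_q0) as [BK HBK].
  exists BK. intros p q [n T] Hp Hq [Hn HT]. simpl in Hn, HT |- *.
  pose proof (HBK p q Hp Hq) as Hagree.
  split.
  - rewrite <- Hn. apply Hagree. pose proof (Nat.pow_nonzero 2 (u + 2)). simpl. lia.
  - intros t Ht. apply b2n_inj. unfold b2n. rewrite <- (HT t), <- (T0_named t).
    unfold odd_part. apply Hagree. pose proof (wcode_bound t) as Hw.
    rewrite Ht, Nat.add_succ_r, (Nat.pow_succ_r' 2 (u + 1)) in *. unfold Nat.double. lia.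
Qed.

(* The answer is a path through the cylinder, so its first n0 bits are [vs]; the name of the
   cylinder agrees with [Tfull_name] below [B], so [decides] makes them [v]. *)
Lemma cylinder_answer_decided lam vs t v B x q :
  (B <= lam)%nat -> length vs = n0 -> decides t v B -> matches (name x) t ->
  K (tree_name (cylinder lam vs)) q ->
  (forall nT, delta_NTr q nT -> in_paths (snd nT) x) -> v = vs.
Proof.
  intros HB Hvs [Hv Hdec] Hx Hq Hpaths.
  destruct (reduction_answer _ _ q x (tree_name_spec _) (cylinder_WWKL lam vs) Hq Hpaths)
    as [r [Hr [y [Hy Hpath]]]].
  assert (Hname : agree_below Tfull_name (tree_name (cylinder lam vs)) B).
  { apply agree_below_mono with lam; [exact HB|].
    apply tree_name_agree_full. intros w Hw. apply cylinder_below. lia. }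
  apply cylinder_path_prefix in Hpath. rewrite <- Hpath.
  apply nth_ext with (d := false) (d' := false); [rewrite prefix_length; congruence|].
  intros i Hi. rewrite prefix_nth by lia. apply b2n_inj.
  rewrite (prf_eval_det _ _ _ _ (Hdec _ _ Hname Hx i ltac:(lia)) _ (H_by_MH _ _ Hr i)).
  apply (Hy i).
Qed.

Lemma full_tree_run_absurd : False.
Proof.
  destruct T0_level_decided_uniform as [u [cls [B Hcls]]].
  destruct (pigeonhole_prefix (filter (proj1_sig T0) (words u)) cls n0) as [vs [Hvs Hcnt]].
  destruct (K_stable_near_Tfull u) as [BK HBK].
  set (lam := (B + BK)%nat).
  assert (Hname : agree_below Tfull_name (tree_name (cylinder lam vs)) BK).
  { apply agree_below_mono with lam; [lia|].
    apply tree_name_agree_full. intros w Hw. apply cylinder_below. lia. }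
  destruct (reduction_instance _ _ (tree_name_spec _) (cylinder_WWKL lam vs))
    as [q1 [HK1 [nT [HnT [y1 [Hm1 _]]]]]].
  destruct (HBK _ _ _ Hname HK1 HnT) as [Hn1 HT1]. rewrite Hn1 in Hm1.
  set (P t := (proj1_sig T0 t && weq (firstn n0 (cls t)) vs)%bool).
  destruct (measure_path_avoiding (snd nT) n0 u P Hm1) as [x [Hx HPx]].
  { unfold P. rewrite <- count_filter.
    pose proof (filter_length_le (proj1_sig T0) (words u)). rewrite length_words in *. lia. }
  set (t := prefix x u).
  assert (HT0t : proj1_sig T0 t = true) by (rewrite <- HT1 by apply prefix_length; apply Hx).
  pose proof (Hcls t (prefix_length x u) HT0t) as Hdec.
  assert (Hne : cls t <> vs).
  { intros E. unfold P in HPx. fold t in HPx.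
    rewrite HT0t, firstn_all2, E in HPx by (rewrite (proj1 Hdec); lia).
    assert (weq vs vs = true) by now apply weq_spec. simpl in HPx. congruence. }
  apply Hne, (cylinder_answer_decided lam vs t (cls t) B x q1);
    [lia|exact Hvs|exact Hdec| |exact HK1|].
  - intros i Hi. unfold t in Hi |- *. rewrite prefix_length in Hi. now rewrite prefix_nth.
  - intros nT' HnT'. eapply in_paths_ext; [|exact Hx].
    eapply delta_Tr_functional; [apply HnT|apply HnT'].
Qed.

End FullTreeRun.

End NoReduction.

Lemma WWKL_not_W_le_starWWKL : ~ W_le WWKL starWWKL.
Proof.
  intros [H [K [[_ [MH H_by_MH]] [[K_functional [MK K_by_MK]] reduction]]]].
  destruct (reduction_instance H K reduction Tfull_name Tfull (tree_name_spec Tfull) Tfull_WWKL)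
    as [q0 [K_q0 [[n T0] [[_ T0_named] _]]]].
  exact (full_tree_run_absurd H K MH MK H_by_MH K_functional K_by_MK reduction
           q0 T0 K_q0 T0_named).
Qed.

Theorem corollary10p9 :
  sW_le starWWKL WWKL /\ W_lt starWWKL WWKL.
Proof.
  split; [exact starWWKL_sW_le_WWKL|].
  split; [exact starWWKL_W_le_WWKL|exact WWKL_not_W_le_starWWKL].
Qed.
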